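(* Let $\mathcal{F}=\{f_i\}_{i=1}^k$ be a frame for $\mathcal{H}_n$ with $\operatorname{rob}(\mathcal{F})=r$, and let $P$ be the orthogonal projection onto a subspace $U$ of $\mathcal{H}_n$. Then the frame $P\mathcal{F}=\{Pf_i\}_{i=1}^k$ for $U$ has maximum robustness $r$ if and only if there exists a subset $\mathcal{F}'$ of $\mathcal{F}$ consisting of $k-r-1$ vectors which does not span $\mathcal{H}_n$ and satisfies $\operatorname{span}(\mathcal{F}')^\perp\subseteq U$.
   Context: $\mathcal{H}_n$ is an $n$-dimensional real or complex Hilbert space. A finite sequence of vectors in a finite-dimensional Hilbert space $V$ is a frame for $V$ iff it spans $V$. A frame $\{f_i\}_{i=1}^k$ for $V$ is robust to $r$ erasures if for every index set $I\subseteq\{1,\dots,k\}$ with $|I|=r$, the sequence $\{f_i\}_{i\notin I}$ still spans $V$. The maximum robustness $\operatorname{rob}(\mathcal{F})$ is the largest $r$ such that $\mathcal{F}$ is robust to $r$ erasures. *)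

From HB Require Import structures.
From mathcomp Require Import all_boot all_order all_algebra.
Set Implicit Arguments. Unset Strict Implicit. Unset Printing Implicit Defensive.
Import Order.TTheory GRing.Theory Num.Theory.
Local Open Scope ring_scope.

(* Vectors of H_n are row vectors 'rV[F]_n; a finite sequence {f_i}_{i<k}
   is the k x n matrix whose i-th row is f_i.  Subspaces are represented
   (as in mxalgebra) by matrices through their row space.  The inner product
   is <u,v> = \sum_j u_j * cj (v_j), with cj = id (real case) or
   cj = complex conjugation (complex case). *)

Definition span_in (F : fieldType) (k n : nat) (Fr : 'M[F]_(k, n))
  (J : {set 'I_k}) : 'M[F]_n :=
  (\sum_(i in J) <<row i Fr>>)%MS.

Definition span_excl (F : fieldType) (k n : nat) (Fr : 'M[F]_(k, n))
  (I : {set 'I_k}) : 'M[F]_n :=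
  (\sum_(i | i \notin I) <<row i Fr>>)%MS.

Definition is_frame (F : fieldType) (k n : nat) (Fr : 'M[F]_(k, n))
  (V : 'M[F]_n) : Prop :=
  (span_excl Fr set0 == V)%MS.

(* robust to r erasures (only r <= k erasures are meaningful) *)
Definition robust (F : fieldType) (k n : nat) (Fr : 'M[F]_(k, n))
  (V : 'M[F]_n) (r : nat) : Prop :=
  (r <= k)%N /\
  forall I : {set 'I_k}, #|I| = r -> (span_excl Fr I == V)%MS.

Definition max_rob (F : fieldType) (k n : nat) (Fr : 'M[F]_(k, n))
  (V : 'M[F]_n) (r : nat) : Prop :=
  robust Fr V r /\ forall s, robust Fr V s -> (s <= r)%N.

(* orthogonal complement of the row space of A w.r.t. <u,v> = u *m (cj v)^T *)
Definition orth_compl (F : fieldType) (cj : F -> F) (m n : nat)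
  (A : 'M[F]_(m, n)) : 'M[F]_n :=
  kermx (map_mx cj A)^T.

(* P (acting on row vectors on the right: v |-> v *m P) is the orthogonal
   projection onto U *)
Definition orth_proj (F : fieldType) (cj : F -> F) (n : nat)
  (P U : 'M[F]_n) : Prop :=
  forall v : 'rV[F]_n,
    (v *m P <= U)%MS /\ (v - v *m P <= orth_compl cj U)%MS.

From HB Require Import structures.
From mathcomp Require Import all_boot all_order all_algebra.
Set Implicit Arguments. Unset Strict Implicit. Unset Printing Implicit Defensive.
Import Order.TTheory GRing.Theory Num.Theory.
Local Open Scope ring_scope.

(* Let T be the orthogonal complement of U.  Since PF is robust to at least r
   erasures, rob(PF) = r means that some r+1 vectors f_i, i in I, can be
   erased so that the span H of the remaining ones no longer projects onto U,
   i.e. H + T is a proper subspace.  Because F is robust to r erasures, H has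
   codimension at most one, so H + T is proper iff H is a hyperplane
   containing T, i.e. H^perp is a nonzero subspace of U.  The set F' is the
   complement of I.  Conversely, if such an F' exists, erasing any s > r
   vectors leaves a span contained in H, which cannot project onto U. *)

Lemma exists_supset_card (T : finType) (A : {set T}) d :
  (#|A| + d <= #|T|)%N -> exists B : {set T}, A \subset B /\ #|B| = (#|A| + d)%N.
Proof.
elim: d A => [|d IH] A h; first by exists A; rewrite addn0.
have: (0 < #|~: A|)%N.
  by move: h; rewrite -(cardsC A) addnS ltn_add2l => /(leq_ltn_trans (leq0n d)).
case/card_gt0P => x; rewrite in_setC => xA.
have := IH (x |: A); rewrite cardsU1 xA add1n addSnnS => /(_ h) [B [sB cB]].
by exists B; split => //; apply: subset_trans sB; apply: subsetUr.
Qed.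

Lemma corank1_addsmx_sub (F : fieldType) n (H T : 'M[F]_n) :
  (n <= (\rank H).+1)%N -> ~~ (1%:M <= H + T)%MS -> (T <= H)%MS.
Proof.
move=> rH; apply: contraNT => nTH; rewrite sub1mx -col_leq_rank.
apply: leq_trans rH (rank_ltmx _); rewrite ltmxE addsmxSl /=.
by apply: contra nTH; apply: submx_trans (addsmxSr _ _).
Qed.

Section Spans.
Variables (F : fieldType) (k n : nat) (Fr : 'M[F]_(k, n)).

Lemma span_excl_mulmx (P : 'M[F]_n) I :
  (span_excl (Fr *m P) I :=: span_excl Fr I *m P)%MS.
Proof.
apply/eqmxP/andP; split.
  apply/sumsmx_subP => i hi; rewrite genmxE row_mul submxMr //.
  by rewrite (sumsmx_sup i) // genmxE.
rewrite /span_excl (sumsmxMr _ (fun i => <<row i Fr>>%MS)).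
apply/sumsmx_subP => i hi; rewrite (eqmxMr P (genmxE _)) -row_mul.
by rewrite (sumsmx_sup i) // genmxE.
Qed.

Lemma span_exclS (I I' : {set 'I_k}) : I \subset I' ->
  (span_excl Fr I' <= span_excl Fr I)%MS.
Proof.
move=> sII'; apply/sumsmx_subP => i hi; apply: (sumsmx_sup i) => //.
by apply: contra hi; apply: (subsetP sII').
Qed.

Lemma span_excl_setD1 (I : {set 'I_k}) i : i \in I ->
  (span_excl Fr (I :\ i) <= span_excl Fr I + <<row i Fr>>)%MS.
Proof.
move=> iI; apply/sumsmx_subP => j hj.
have [->|ne] := eqVneq j i; first exact: addsmxSr.
apply: submx_trans (addsmxSl _ _); apply: (sumsmx_sup j) => //.
by move: hj; rewrite in_setD1 ne.
Qed.

Lemma span_exclT : span_excl Fr setT = 0.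
Proof. by rewrite /span_excl big_pred0 // => i; rewrite in_setT. Qed.

Lemma span_inE (J : {set 'I_k}) : span_in Fr J = span_excl Fr (~: J).
Proof. by apply: eq_bigl => i; rewrite in_setC negbK. Qed.

Variable V : 'M[F]_n.

Lemma robustP s :
  reflect (robust Fr V s)
    ((s <= k)%N && [forall I : {set 'I_k}, (#|I| == s) ==> (span_excl Fr I == V)%MS]).
Proof.
apply: (iffP andP) => -[sk hI]; split => //.
  by move=> I cI; have /implyP := forallP hI I; apply; rewrite cI.
by apply/forallP => I; apply/implyP => /eqP; apply: hI.
Qed.

Lemma robust_ltn r : (0 < \rank V)%N -> robust Fr V r -> (r < k)%N.
Proof.
move=> V0 [rk rob]; rewrite ltn_neqAle rk andbT; apply: contraTneq V0 => rk'.
have := rob setT; rewrite cardsT card_ord rk' span_exclT => /(_ erefl) /eqmx_rank.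
by rewrite mxrank0 => <-.
Qed.

Lemma robust_span_excl_corank1 r (I : {set 'I_k}) :
  robust Fr V r -> #|I| = r.+1 -> (\rank V <= (\rank (span_excl Fr I)).+1)%N.
Proof.
move=> [_ rob] cI; have /card_gt0P [i iI] : (0 < #|I|)%N by rewrite cI.
have cIi : #|I :\ i| = r by move: cI; rewrite (cardsD1 i) iI add1n => -[].
rewrite -(eqmx_rank (rob _ cIi)).
apply: leq_trans (mxrankS (span_excl_setD1 iI)) _.
apply: leq_trans (mxrank_adds_leqif _ _) _.
by rewrite -[(\rank _).+1]addn1 leq_add2l mxrank_gen rank_leq_row.
Qed.

Hypothesis span0_sub : (span_excl Fr set0 <= V)%MS.

Lemma robust_leq s t : robust Fr V s -> (t <= s)%N -> robust Fr V t.
Proof.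
move=> [sk rob] ts; split => [|I cI]; first exact: leq_trans sk.
have [|B [sIB cB]] := @exists_supset_card _ I (s - t); first by rewrite cI subnKC // card_ord.
rewrite cI subnKC // in cB; have /andP [_ sVB] := rob B cB.
apply/andP; split; last exact: submx_trans sVB (span_exclS sIB).
by apply: submx_trans span0_sub; apply: span_exclS; apply: sub0set.
Qed.

Lemma max_robE r : max_rob Fr V r <-> robust Fr V r /\ ~ robust Fr V r.+1.
Proof.
split=> [[rob maxr]|[rob nrob]]; first by split=> // /maxr; rewrite ltnn.
by split=> // s robs; rewrite leqNgt; apply/negP => /(robust_leq robs).
Qed.

End Spans.

Section Orthogonality.
Variables (F : fieldType) (cj : {rmorphism F -> F}).
Hypothesis cjK : involutive cj.
Hypothesis anisotropic : forall n (x : 'rV[F]_n), x *m (map_mx cj x)^T = 0 -> x = 0.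

Local Notation oc := (orth_compl cj).

Lemma sub_orth_compl m p n (A : 'M[F]_(m, n)) (B : 'M[F]_(p, n)) :
  (A <= oc B)%MS = (A *m (map_mx cj B)^T == 0).
Proof. exact: sub_kermx. Qed.

Lemma orth_sym m p n (A : 'M[F]_(m, n)) (B : 'M[F]_(p, n)) :
  (A <= oc B)%MS -> (B <= oc A)%MS.
Proof.
rewrite !sub_orth_compl => /eqP AB.
have map_cjK q s (M : 'M[F]_(q, s)) : map_mx cj (map_mx cj M) = M.
  by apply/matrixP => i j; rewrite !mxE cjK.
have : (map_mx cj (A *m (map_mx cj B)^T))^T = 0 by rewrite AB map_mx0 trmx0.
by rewrite map_mxM trmx_mul map_trmx map_cjK trmxK => ->.
Qed.

Lemma orth_compl_cap0 n p (x : 'rV[F]_n) (A : 'M[F]_(p, n)) :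
  (x <= A)%MS -> (x <= oc A)%MS -> x = 0.
Proof.
case/submxP => D ->; rewrite sub_orth_compl => /eqP DA; apply: anisotropic.
by rewrite map_mxM trmx_mul mulmxA DA mul0mx.
Qed.

Lemma orth_complS m p n (A : 'M[F]_(m, n)) (B : 'M[F]_(p, n)) :
  (A <= B)%MS -> (oc B <= oc A)%MS.
Proof. by move=> sAB; apply: orth_sym; apply: submx_trans sAB (orth_sym _). Qed.

Lemma orth_complK m n (A : 'M[F]_(m, n)) : (oc (oc A) == A)%MS.
Proof.
have sA : (A <= oc (oc A))%MS by apply: orth_sym.
have rank_orth p (B : 'M[F]_(p, n)) : \rank (oc B) = (n - \rank B)%N.
  by rewrite mxrank_ker mxrank_tr mxrank_map.
suff : (A == oc (oc A))%MS by move/eqmxP/eqmx_sym/eqmxP.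
by rewrite -(mxrank_leqif_eq sA) !rank_orth subKn ?rank_leq_col.
Qed.

Lemma orth_complSE m p n (A : 'M[F]_(m, n)) (B : 'M[F]_(p, n)) :
  (oc B <= oc A)%MS = (A <= B)%MS.
Proof.
apply/idP/idP => [sBA|]; last exact: orth_complS.
by rewrite -(eqmxP (orth_complK A)) -(eqmxP (orth_complK B)) orth_complS.
Qed.

Lemma orth_compl_subC n (A B : 'M[F]_n) : (oc A <= B)%MS = (oc B <= A)%MS.
Proof. by rewrite -orth_complSE (eqmxP (orth_complK A)). Qed.

Section Projection.
Variables (n : nat) (U P : 'M[F]_n).
Hypothesis projP : orth_proj cj P U.
Local Notation T := (oc U).

Lemma proj_sub m (X : 'M[F]_(m, n)) : (X *m P <= U)%MS.
Proof. by apply/row_subP => i; rewrite row_mul; case: (projP (row i X)). Qed.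

Lemma proj_subr_orth (v : 'rV_n) : (v - v *m P <= T)%MS.
Proof. by case: (projP v). Qed.

Lemma proj_id (u : 'rV_n) : (u <= U)%MS -> u *m P = u.
Proof.
move=> uU; apply/eqP; rewrite eq_sym -subr_eq0; apply/eqP.
apply: (orth_compl_cap0 _ (proj_subr_orth u)).
by rewrite addmx_sub ?eqmx_opp ?proj_sub.
Qed.

Lemma proj_orth0 (t : 'rV_n) : (t <= T)%MS -> t *m P = 0.
Proof.
move=> tT; apply: (orth_compl_cap0 (proj_sub t)).
have -> : t *m P = t - (t - t *m P) by rewrite opprB addrC subrK.
by rewrite addmx_sub ?eqmx_opp ?proj_subr_orth.
Qed.

Lemma proj_eqmx_full (H : 'M[F]_n) : (H *m P == U)%MS = (1%:M <= H + T)%MS.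
Proof.
rewrite /eqmx proj_sub /=; apply/idP/idP => [sUHP | full].
  apply/row_subP => i; set v := row i _.
  have /submxP [D vPE] := submx_trans (proj_sub v) sUHP.
  have -> : v = D *m H + (v - v *m P) - (D *m H - D *m H *m P).
    by rewrite -mulmxA -vPE opprB addrC addrA subrK addrC subrK.
  apply: addmx_sub; first exact: addmx_sub_adds (submxMl _ _) (proj_subr_orth _).
  by rewrite eqmx_opp; apply: submx_trans (proj_subr_orth _) (addsmxSr _ _).
apply/row_subP => i.
have /sub_addsmxP [[a b] /= uE] := submx_trans (submx1 (row i U)) full.
rewrite -(proj_id (row_sub i U)) uE mulmxDl (proj_orth0 (submxMl _ _)) addr0.
by rewrite -mulmxA submxMl.
Qed.

Lemma not_full_addsmx_orth (H : 'M[F]_n) :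
  (n <= (\rank H).+1)%N ->
  ~~ (1%:M <= H + T)%MS = ~~ (H == 1%:M)%MS && (oc H <= U)%MS.
Proof.
move=> rH; rewrite /eqmx submx1 /= -orth_compl_subC.
apply/idP/andP => [nfull | [nH sTH]].
  split; last exact: corank1_addsmx_sub nfull.
  by apply: contra nfull => /submx_trans; apply; apply: addsmxSl.
by rewrite (addsmx_idPl sTH).
Qed.

Variables (k : nat) (Fr : 'M[F]_(k, n)) (r : nat).

Lemma span_excl_proj_eq (I : {set 'I_k}) :
  (span_excl (Fr *m P) I == U)%MS = (1%:M <= span_excl Fr I + T)%MS.
Proof. by rewrite -proj_eqmx_full /eqmx !span_excl_mulmx. Qed.

Lemma robust_proj : robust Fr 1%:M r -> robust (Fr *m P) U r.
Proof.
move=> [rk rob]; split => // I cI.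
rewrite span_excl_proj_eq; apply: submx_trans (addsmxSl _ _).
by case/andP: (rob I cI).
Qed.

Theorem max_rob_proj :
  (0 < n)%N -> max_rob Fr 1%:M r ->
  (max_rob (Fr *m P) U r <->
   exists J : {set 'I_k},
     (#|J| + r + 1)%N = k /\
     ~~ (span_in Fr J == 1%:M)%MS /\
     (oc (span_in Fr J) <= U)%MS).
Proof.
move=> n0 [rob _]; have rk : (r < k)%N by apply: robust_ltn rob; rewrite mxrank1.
have not_robE (I : {set 'I_k}) : #|I| = r.+1 ->
    ~~ (span_excl (Fr *m P) I == U)%MS =
    ~~ (span_excl Fr I == 1%:M)%MS && (oc (span_excl Fr I) <= U)%MS.
  move=> cI; rewrite span_excl_proj_eq.
  by rewrite not_full_addsmx_orth // -{1}(mxrank1 F n) (robust_span_excl_corank1 rob).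
have rowsU : (span_excl (Fr *m P) set0 <= U)%MS.
  by rewrite span_excl_mulmx proj_sub.
apply: iff_trans (max_robE rowsU r) _; split=> [[_ /robustP] | [J [cJ [nJ sJ]]]].
  rewrite rk negb_forall => /existsP [I]; rewrite negb_imply => /andP [/eqP cI].
  rewrite not_robE // => /andP [nI sI]; exists (~: I); rewrite span_inE setCK; split=> //.
  by rewrite -addnA addn1 -cI addnC cardsC card_ord.
have cJC : #|~: J| = r.+1.
  by apply/(@addnI #|J|); rewrite cardsC card_ord addnS -addn1 cJ.
split; first exact: robust_proj.
move/robustP/andP => [_ /forallP /(_ (~: J))]; rewrite cJC eqxx /= => hJ.
by move: (not_robE _ cJC); rewrite hJ -!(span_inE Fr) nJ sJ.
Qed.

End Projection.
End Orthogonality.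

Lemma real_form_anisotropic (R : realFieldType) n (x : 'rV[R]_n) :
  x *m (map_mx (@idfun R) x)^T = 0 -> x = 0.
Proof.
move=> /(congr1 (fun M : 'M_1 => M 0 0)); rewrite !mxE.
rewrite (eq_bigr (fun j => x 0 j ^+ 2)) => [xx0|j _]; last by rewrite !mxE expr2.
apply/rowP => j; have /eqP : x 0 j ^+ 2 = 0.
  by apply: (psumr_eq0P _ xx0) => // i _; apply: sqr_ge0.
by rewrite sqrf_eq0 mxE => /eqP.
Qed.

Lemma hermitian_form_anisotropic (C : numClosedFieldType) n (x : 'rV[C]_n) :
  x *m (map_mx (@Num.conj C) x)^T = 0 -> x = 0.
Proof.
move=> /(congr1 (fun M : 'M_1 => M 0 0)); rewrite !mxE.
rewrite (eq_bigr (fun j => x 0 j * (x 0 j)^*)) => [xx0|j _]; last by rewrite !mxE.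
apply/rowP => j; have /eqP : x 0 j * (x 0 j)^* = 0.
  by apply: (psumr_eq0P _ xx0) => // i _; apply: mul_conjC_ge0.
by rewrite mul_conjC_eq0 mxE => /eqP.
Qed.

Theorem theorem2p4 :
  (* real case *)
  (forall (R : realFieldType) (n k : nat) (Fr : 'M[R]_(k, n))
          (U P : 'M[R]_n) (r : nat),
      (0 < n)%N ->
      is_frame Fr 1%:M ->
      max_rob Fr 1%:M r ->
      orth_proj idfun P U ->
      (max_rob (Fr *m P) U r <->
       exists J : {set 'I_k},
         (#|J| + r + 1)%N = k /\
         ~~ (span_in Fr J == 1%:M)%MS /\
         (orth_compl idfun (span_in Fr J) <= U)%MS))
  /\
  (* complex case *)
  (forall (C : numClosedFieldType) (n k : nat) (Fr : 'M[C]_(k, n))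
          (U P : 'M[C]_n) (r : nat),
      (0 < n)%N ->
      is_frame Fr 1%:M ->
      max_rob Fr 1%:M r ->
      orth_proj Num.conj P U ->
      (max_rob (Fr *m P) U r <->
       exists J : {set 'I_k},
         (#|J| + r + 1)%N = k /\
         ~~ (span_in Fr J == 1%:M)%MS /\
         (orth_compl Num.conj (span_in Fr J) <= U)%MS)).
Proof.
split=> [R n k Fr U P r n0 _ rob projP | C n k Fr U P r n0 _ rob projP].
- exact: (max_rob_proj (cj := GRing.RMorphism.clone _ _ (@idfun R) _)
            (fun _ => erefl) (@real_form_anisotropic R) projP n0 rob).
- exact: (max_rob_proj (cj := GRing.RMorphism.clone _ _ (@Num.conj C) _)
            (@conjCK C) (@hermitian_form_anisotropic C) projP n0 rob).
Qed.
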